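(* Let $N\ge1$, $1\le m\le N$, $\alpha>0$, and $V$ a real symmetric positive definite $N\times N$ matrix. Let $A=\begin{pmatrix}0&E\\-V&-\alpha D\end{pmatrix}$ and $C_G=\frac1{2\alpha}\begin{pmatrix}V^{-1}&0\\0&E\end{pmatrix}$. For $z\in\mathbb{C}$ define $$\rho(z)=(V+z^2)^{-1},\quad \kappa(z)=\hat e^T\rho(z)\hat e,\quad \tau(z)=E^{(m)}+\alpha z\kappa(z),\quad T(z)=\alpha\hat e\,\tau(z)^{-1}\hat e^T,\quad \theta(z)=\rho(z)T(z)\rho(z).$$ Then, for every $z$ at which $A-z$, $V+z^2$ and $\tau(z)$ are invertible, $$(A-z)^{-1}C_G=\frac1{2\alpha}\begin{pmatrix}Q_{11}&Q_{12}\\Q_{21}&Q_{22}\end{pmatrix}$$ with $N\times N$ blocks $$Q_{11}=-z\rho(z)V^{-1}-\theta(z),\quad Q_{12}=-\rho(z)+z\theta(z),\quad Q_{21}=zQ_{11}+V^{-1},\quad Q_{22}=zQ_{12}.$$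
   Context: $E$ is the $N\times N$ identity, $E^{(m)}$ the $m\times m$ identity, $D$ the diagonal $N\times N$ matrix with $D_{k,k}=1$ for $k\in\{N-m+1,\dots,N\}$ and $0$ otherwise, and $\hat e$ the $N\times m$ matrix whose only nonzero entries are $\hat e_{N-m+i,i}=1$, $i=1,\dots,m$ (so $\kappa(z)$ is the restriction of $\rho(z)$ to indices $N-m+1,\dots,N$). *)

From HB Require Import structures.
From mathcomp Require Import all_boot all_order all_algebra.
From mathcomp Require Import complex.
Set Implicit Arguments. Unset Strict Implicit. Unset Printing Implicit Defensive.
Import Order.TTheory GRing.Theory Num.Theory.
Local Open Scope ring_scope.

(* Real numbers: an arbitrary real closed field R; complex numbers: R[i]. *)

Definition cmx (R : rcfType) (m n : nat) (M : 'M[R]_(m, n)) : 'M[R[i]]_(m, n) :=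
  map_mx (fun x : R => (x%:C)%C) M.

Definition sym_posdef (R : rcfType) (N : nat) (V : 'M[R]_N) : Prop :=
  V^T = V /\ forall x : 'cV[R]_N, x != 0 -> 0 < (x^T *m V *m x) 0 0.

(* D: diagonal, D_{k,k} = 1 for k in {N-m+1..N} (1-based), i.e. k >= N-m (0-based) *)
Definition Dmx (C : pzRingType) (N m : nat) : 'M[C]_N :=
  \matrix_(k < N, l < N) ((k == l) && (N - m <= k)%N)%:R.

(* ehat: N x m, ehat_{N-m+i, i} = 1 (1-based), zero elsewhere *)
Definition ehat (C : pzRingType) (N m : nat) : 'M[C]_(N, m) :=
  \matrix_(k < N, i < m) (nat_of_ord k == (N - m + i)%N)%:R.

Section Defs.
Variables (R : rcfType) (N m : nat) (alpha : R) (V : 'M[R]_N).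
Local Notation C := R[i].
Local Notation a := ((alpha%:C)%C : C).

Definition Amx : 'M[C]_(N + N) :=
  block_mx 0 1%:M (- cmx V) (- (a *: Dmx C N m)).

Definition CGmx : 'M[C]_(N + N) :=
  (2 * a)^-1 *: block_mx (invmx (cmx V)) 0 0 1%:M.

Definition rho (z : C) : 'M[C]_N := invmx (cmx V + (z ^+ 2)%:M).
Definition kappa (z : C) : 'M[C]_m := (ehat C N m)^T *m rho z *m ehat C N m.
Definition tau (z : C) : 'M[C]_m := 1%:M + (a * z) *: kappa z.
Definition Tmx (z : C) : 'M[C]_N :=
  a *: (ehat C N m *m invmx (tau z) *m (ehat C N m)^T).
Definition theta (z : C) : 'M[C]_N := rho z *m Tmx z *m rho z.
End Defs.

From HB Require Import structures.
From mathcomp Require Import all_boot all_order all_algebra.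
From mathcomp Require Import complex zify.
Set Implicit Arguments. Unset Strict Implicit. Unset Printing Implicit Defensive.
Import Order.TTheory GRing.Theory Num.Theory.
Local Open Scope ring_scope.

(* Multiply [(A - z) Q] out blockwise.  The first block row is immediate; in
   the second, after eliminating [Q21 = z Q11 + V^-1] and [Q22 = z Q12], only
   the quadratic pencil [G = V + z^2 + alpha z D] acting on [Q11] and [Q12]
   remains.  As [D = ehat ehat^T], the push-through identity
   [(1 + b U W rho) U (1 + b W rho U)^-1 W = U W] gives [G rho T = alpha D],
   whence [G Q12 = -1] and, with [V^-1 = rho + z^2 rho V^-1],
   [G Q11 = -(alpha D + z) V^-1]. *)

Lemma sym_posdef_cmx_unit (R : rcfType) (N : nat) (V : 'M[R]_N) :
  sym_posdef V -> cmx V \in unitmx.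
Proof.
move=> [_ Vpd].
have -> : cmx V = map_mx (real_complex R) V by [].
rewrite map_unitmx unitmxE unitfE; apply/negP => /det0P [v v0 vV0].
have := Vpd v^T; rewrite trmx_eq0 v0 trmxK vV0 mul0mx mxE ltxx.
by move/(_ isT).
Qed.

Lemma mul_ehat_tr (C : pzRingType) (N m : nat) : (m <= N)%N ->
  ehat C N m *m (ehat C N m)^T = Dmx C N m.
Proof.
move=> mN; apply/matrixP => k l; rewrite !mxE.
case: (leqP (N - m) k) => hk.
  have lt : (k - (N - m) < m)%N by have := ltn_ord k; lia.
  rewrite (bigD1 (Ordinal lt)) //= big1 ?addr0.
    by rewrite !mxE /= subnKC // eqxx mul1r andbT eq_sym.
  move=> i /eqP ni; rewrite !mxE.
  case: eqP => [hi|]; last by rewrite mul0r.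
  by case: ni; apply/val_inj => /=; rewrite hi addKn.
rewrite andbF big1 // => i _; rewrite !mxE.
case: eqP => [hi|]; last by rewrite mul0r.
by move: hk; rewrite hi; lia.
Qed.

Lemma push_through_invmx (R : comUnitRingType) (n k : nat)
    (U : 'M[R]_(n, k)) (W : 'M[R]_(k, n)) (P : 'M[R]_n) (b : R) :
  1%:M + b *: (W *m P *m U) \in unitmx ->
  (1%:M + b *: (U *m W *m P)) *m U *m invmx (1%:M + b *: (W *m P *m U)) *m W
    = U *m W.
Proof.
move=> tu.
have -> : (1%:M + b *: (U *m W *m P)) *m U = U *m (1%:M + b *: (W *m P *m U)).
  by rewrite mulmxDl mulmxDr mul1mx mulmx1 -scalemxAl -scalemxAr !mulmxA.
by rewrite -[U *m _ *m _]mulmxA mulmxV // mulmx1.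
Qed.

Section Resolvent.
Variables (R : rcfType) (N m : nat) (alpha : R) (V : 'M[R]_N) (z : R[i]).
Hypotheses (mN : (m <= N)%N) (Vu : cmx V \in unitmx)
  (Wu : cmx V + (z ^+ 2)%:M \in unitmx) (tau_u : tau m alpha V z \in unitmx).

Local Notation a := ((alpha%:C)%C : R[i]).
Local Notation D := (Dmx R[i] N m).
Local Notation P := (rho V z).
Local Notation T := (Tmx m alpha V z).
Local Notation Vi := (invmx (cmx V)).

Definition Q11 : 'M[R[i]]_N := - (z *: (P *m Vi)) - theta m alpha V z.
Definition Q12 : 'M[R[i]]_N := - P + z *: theta m alpha V z.
Definition Q21 : 'M[R[i]]_N := z *: Q11 + Vi.
Definition Q22 : 'M[R[i]]_N := z *: Q12.

Definition pencil : 'M[R[i]]_N := cmx V + z *: (a *: D + z%:M).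

Lemma pencil_rho : pencil *m P = 1%:M + (a * z) *: (D *m P).
Proof.
rewrite /pencil scalerDr scalerA scale_scalar_mx -expr2 addrCA addrC.
by rewrite mulmxDl mulmxV // [z * a]mulrC -scalemxAl.
Qed.

Lemma pencil_rho_Tmx : pencil *m P *m T = a *: D.
Proof.
rewrite pencil_rho /Tmx -mul_ehat_tr // -!scalemxAr !mulmxA.
by rewrite push_through_invmx.
Qed.

Lemma invmx_cmx_rho : Vi = P + z ^+ 2 *: (P *m Vi).
Proof.
rewrite -{1}[Vi]mul1mx -(mulVmx Wu) -mulmxA mulmxDl mulmxV //.
by rewrite mul_scalar_mx mulmxDr mulmx1 scalemxAr.
Qed.

Lemma pencil_Q12 : pencil *m Q12 = - 1%:M.
Proof.
rewrite /Q12 /theta mulmxDr mulmxN -scalemxAr !mulmxA pencil_rho_Tmx pencil_rho.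
by rewrite -scalemxAl scalerA [z * a]mulrC opprD -addrA addNr addr0.
Qed.

Lemma pencil_Q11 : pencil *m Q11 = - ((a *: D + z%:M) *m Vi).
Proof.
rewrite /Q11 /theta mulmxDr !mulmxN -scalemxAr !mulmxA pencil_rho_Tmx pencil_rho.
rewrite -opprD; congr (- _).
rewrite mulmxDl mul1mx scalerDr -!scalemxAl scalerA mulmxDl mul_scalar_mx.
rewrite [RHS]addrC -addrA; congr (_ + _).
rewrite [in RHS]invmx_cmx_rho mulmxDr -!scalemxAl -scalemxAr scalerA mulmxA.
by rewrite addrC mulrCA -expr2.
Qed.

Lemma Amx_sub_mul_col (k : nat) (X Y : 'M[R[i]]_(N, k)) :
  (Amx m alpha V - z%:M) *m col_mx X (z *: X + Y)
    = col_mx Y (- (pencil *m X) - (a *: D + z%:M) *m Y).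
Proof.
rewrite /Amx [z%:M](scalar_mx_block N N) opp_block_mx add_block_mx mul_block_col.
congr col_mx; first by rewrite sub0r subr0 mul1mx mulNmx mul_scalar_mx addKr.
rewrite subr0 -opprD !mulNmx mulmxDr -scalemxAr opprD addrA -opprD.
by rewrite /pencil [in RHS]mulmxDl -[in RHS]scalemxAl.
Qed.

Lemma Amx_sub_mul_Q :
  (Amx m alpha V - z%:M) *m block_mx Q11 Q12 Q21 Q22 = block_mx Vi 0 0 1%:M.
Proof.
have -> : Q22 = z *: Q12 + 0 by rewrite addr0.
rewrite !block_mxEh mul_mx_row /Q21 !Amx_sub_mul_col pencil_Q11 pencil_Q12.
by rewrite mulmx0 !subr0 !opprK subrr.
Qed.
End Resolvent.

Theorem lemma5 (R : rcfType) (N m : nat) (alpha : R) (V : 'M[R]_N) (z : R[i]) :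
  (1 <= N)%N -> (1 <= m <= N)%N -> 0 < alpha -> sym_posdef V ->
  Amx m alpha V - z%:M \in unitmx ->
  cmx V + (z ^+ 2)%:M \in unitmx ->
  tau m alpha V z \in unitmx ->
  let Vi := invmx (cmx V) in
  let Q11 := - (z *: (rho V z *m Vi)) - theta m alpha V z in
  let Q12 := - rho V z + z *: theta m alpha V z in
  let Q21 := z *: Q11 + Vi in
  let Q22 := z *: Q12 in
  invmx (Amx m alpha V - z%:M) *m CGmx alpha V
    = (2 * (alpha%:C)%C)^-1 *: block_mx Q11 Q12 Q21 Q22.
Proof.
move=> _ /andP[_ mN] _ Vpd Au Wu tau_u Vi Q11 Q12 Q21 Q22.
rewrite /CGmx -scalemxAr -(Amx_sub_mul_Q mN (sym_posdef_cmx_unit Vpd) Wu tau_u).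
by rewrite mulKmx.
Qed.
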